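(* Let $\mathbf L\in\mathbb R_+^{n\times k}$ and let $\boldsymbol\psi:\mathcal C\to\mathbb R_+^n$ be $\mathbf L$-calibrated. Then for every point $\mathbf z\in\mathcal S_\psi$ there exists $t\in[k]$ such that $\mathcal N^\psi(\mathbf z)\subseteq\mathcal Q^{\mathbf L}_t$.
   Context: Notation: $[m]=\{1,\dots,m\}$; $\Delta_n=\{\mathbf p\in\mathbb R_+^n:\sum_i p_i=1\}$. A loss matrix $\mathbf L\in\mathbb R_+^{n\times k}$ has columns $\boldsymbol\ell_t$, $t\in[k]$. Standing assumption: for each $t\in[k]$ there is $\mathbf p\in\Delta_n$ with $\operatorname{argmin}_{t'}\mathbf p^\top\boldsymbol\ell_{t'}=\{t\}$. A surrogate loss is $\boldsymbol\psi:\mathcal C\to\mathbb R_+^n$ with $\mathcal C\subseteq\mathbb R^d$ convex; $\mathcal R_\psi=\boldsymbol\psi(\mathcal C)$, $\mathcal S_\psi=\operatorname{conv}(\mathcal R_\psi)$. $\boldsymbol\psi$ is $\mathbf L$-calibrated if there is $\mathrm{pred}:\mathcal C\to[k]$ such that for all $\mathbf p\in\Delta_n$: $\inf_{\mathbf u\in\mathcal C:\mathrm{pred}(\mathbf u)\notin\operatorname{argmin}_t\mathbf p^\top\boldsymbol\ell_t}\mathbf p^\top\boldsymbol\psi(\mathbf u)>\inf_{\mathbf u\in\mathcal C}\mathbf p^\top\boldsymbol\psi(\mathbf u)$. Trigger probability set: $\mathcal Q^{\mathbf L}_t=\{\mathbf p\in\Delta_n: t\in\operatorname{argmin}_{t'\in[k]}\mathbf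 p^\top\boldsymbol\ell_{t'}\}$. Positive normal set at $\mathbf z\in\mathcal S_\psi$: $\mathcal N^\psi(\mathbf z)=\{\mathbf p\in\Delta_n:\mathbf p^\top\mathbf z=\inf_{\mathbf z'\in\mathcal S_\psi}\mathbf p^\top\mathbf z'\}$. *)

From Stdlib Require Import Reals Lra List.
Import ListNotations.
Open Scope R_scope.

(* Vectors in R^m are represented as functions nat -> R; only the
   coordinates 0..m-1 are meaningful. Indices of [n] and [k] are 0-based:
   the outcome i ranges over i < n, the prediction t over t < k. *)
Definition vec := nat -> R.

Definition dot (n : nat) (p z : vec) : R :=
  fold_right Rplus 0 (map (fun i => p i * z i) (seq 0 n)).

Definition simplex (n : nat) (p : vec) : Prop :=
  (forall i, (i < n)%nat -> 0 <= p i) /\ dot n (fun _ => 1) p = 1.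

(* loss matrix L in R_+^{n x k}: L i t is the entry (row i, column t);
   column t is ell_t = fun i => L i t *)
Definition col (L : nat -> nat -> R) (t : nat) : vec := fun i => L i t.

Definition loss_matrix (n k : nat) (L : nat -> nat -> R) : Prop :=
  forall i t, (i < n)%nat -> (t < k)%nat -> 0 <= L i t.

Definition in_argmin (n k : nat) (L : nat -> nat -> R) (p : vec) (t : nat) : Prop :=
  (t < k)%nat /\ forall t', (t' < k)%nat -> dot n p (col L t) <= dot n p (col L t').

Definition standing_assumption (n k : nat) (L : nat -> nat -> R) : Prop :=
  forall t, (t < k)%nat ->
    exists p, simplex n p /\ forall t', in_argmin n k L p t' <-> t' = t.

Definition in_Rd (d : nat) (u : vec) : Prop := forall j, (d <= j)%nat -> u j = 0.

Definition convex_set (d : nat) (C : vec -> Prop) : Prop :=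
  (forall u, C u -> in_Rd d u) /\
  (forall u v lam, C u -> C v -> 0 <= lam <= 1 ->
     C (fun j => lam * u j + (1 - lam) * v j)).

Definition surrogate (n : nat) (C : vec -> Prop) (psi : vec -> vec) : Prop :=
  forall u, C u -> forall i, (i < n)%nat -> 0 <= psi u i.

(* "inf_{u in A} f u > inf_{u in B} f u" in the extended reals
   (inf of the empty set = +infinity), unfolded:
   there is r with inf_A f >= r and inf_B f < r. *)
Definition inf_gt (A B : vec -> Prop) (f : vec -> R) : Prop :=
  exists r, (forall u, A u -> r <= f u) /\ (exists u, B u /\ f u < r).

Definition calibrated (n k : nat) (L : nat -> nat -> R)
    (C : vec -> Prop) (psi : vec -> vec) : Prop :=
  exists pred : vec -> nat,
    (forall u, C u -> (pred u < k)%nat) /\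
    forall p, simplex n p ->
      inf_gt (fun u => C u /\ ~ in_argmin n k L p (pred u)) C
             (fun u => dot n p (psi u)).

(* S_psi = conv(psi(C)) : finite convex combinations (coordinates < n) *)
Definition S_psi (n : nat) (C : vec -> Prop) (psi : vec -> vec) (z : vec) : Prop :=
  exists (m : nat) (lam : nat -> R) (us : nat -> vec),
    (0 < m)%nat /\
    (forall j, (j < m)%nat -> C (us j) /\ 0 <= lam j) /\
    dot m lam (fun _ => 1) = 1 /\
    forall i, (i < n)%nat ->
      z i = dot m lam (fun j => psi (us j) i).

Definition is_inf (X : R -> Prop) (x : R) : Prop :=
  (forall y, X y -> x <= y) /\ (forall b, (forall y, X y -> b <= y) -> b <= x).

Definition normal_set (n : nat) (C : vec -> Prop) (psi : vec -> vec) (z p : vec) : Prop :=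
  simplex n p /\
  is_inf (fun x => exists z', S_psi n C psi z' /\ x = dot n p z') (dot n p z).

Definition trigger (n k : nat) (L : nat -> nat -> R) (t : nat) (p : vec) : Prop :=
  simplex n p /\ in_argmin n k L p t.

(* Write z = sum_j lam_j psi(u_j) with some lam_j0 > 0, and take t = pred(u_j0).
   For p in N^psi(z), the value p^T z is the infimum of p^T psi over C, and it is
   also the lam-average of the values p^T psi(u_j), all of which are at least that
   infimum; hence every term of positive weight attains it, so u_j0 minimises
   p^T psi over C.  Calibration forbids a minimiser whose prediction lies outside
   argmin_t p^T ell_t, so p lies in Q_t. *)
From Stdlib Require Import Reals Lra Lia List Classical.
Open Scope R_scope.

Definition sumR (l : list nat) (f : nat -> R) : R := fold_right Rplus 0 (map f l).

Lemma dot_sumR (n : nat) (p z : vec) : dot n p z = sumR (seq 0 n) (fun i => p i * z i).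
Proof. reflexivity. Qed.

Lemma sumR_ext (l : list nat) (f g : nat -> R) :
  (forall x, In x l -> f x = g x) -> sumR l f = sumR l g.
Proof.
  induction l as [|a l IH]; intros H; [reflexivity|]; unfold sumR in *; simpl.
  rewrite (H a) by (left; reflexivity).
  rewrite IH by (intros x Hx; apply H; right; exact Hx). reflexivity.
Qed.

Lemma sumR_add (l : list nat) (f g : nat -> R) :
  sumR l (fun x => f x + g x) = sumR l f + sumR l g.
Proof. induction l; unfold sumR in *; simpl; [lra|]. rewrite IHl; lra. Qed.

Lemma sumR_mull (l : list nat) (c : R) (f : nat -> R) :
  c * sumR l f = sumR l (fun x => c * f x).
Proof. induction l; unfold sumR in *; simpl; [lra|]. rewrite <- IHl; lra. Qed.

Lemma sumR_zero (l : list nat) : sumR l (fun _ => 0) = 0.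
Proof. induction l; unfold sumR in *; simpl; lra. Qed.

Lemma sumR_swap (l1 l2 : list nat) (F : nat -> nat -> R) :
  sumR l1 (fun i => sumR l2 (F i)) = sumR l2 (fun j => sumR l1 (fun i => F i j)).
Proof.
  induction l1 as [|a l1 IH].
  - symmetry. apply (sumR_zero l2).
  - change (sumR l2 (F a) + sumR l1 (fun i => sumR l2 (F i)) =
            sumR l2 (fun j => F a j + sumR l1 (fun i => F i j))).
    rewrite IH, sumR_add. reflexivity.
Qed.

Lemma sumR_le (l : list nat) (f g : nat -> R) :
  (forall x, In x l -> f x <= g x) -> sumR l f <= sumR l g.
Proof.
  induction l as [|a l IH]; unfold sumR in *; simpl; intros H; [lra|].
  specialize (H a (or_introl eq_refl)) as Ha.
  specialize (IH (fun x Hx => H x (or_intror Hx))). lra.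
Qed.

Lemma sumR_ge0 (l : list nat) (f : nat -> R) :
  (forall y, In y l -> 0 <= f y) -> 0 <= sumR l f.
Proof. intros H. rewrite <- (sumR_zero l). apply sumR_le. exact H. Qed.

Lemma sumR_term_le (l : list nat) (f : nat -> R) (x : nat) :
  In x l -> (forall y, In y l -> 0 <= f y) -> f x <= sumR l f.
Proof.
  induction l as [|a l IH]; intros Hx Hf; [contradiction|].
  change (f x <= f a + sumR l f).
  assert (Ha : 0 <= f a) by (apply Hf; left; reflexivity).
  assert (Hl : forall y, In y l -> 0 <= f y) by (intros y Hy; apply Hf; right; exact Hy).
  destruct Hx as [<-|Hx].
  - pose proof (sumR_ge0 l f Hl). lra.
  - pose proof (IH Hx Hl). lra.
Qed.

Lemma dot_convex_combination (n m : nat) (lam p z : vec) (w : nat -> vec) :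
  (forall i, (i < n)%nat -> z i = dot m lam (fun j => w j i)) ->
  dot n p z = dot m lam (fun j => dot n p (w j)).
Proof.
  intros Hz. rewrite !dot_sumR.
  transitivity (sumR (seq 0 n) (fun i => sumR (seq 0 m) (fun j => lam j * (p i * w j i)))).
  - apply sumR_ext. intros i Hi. apply in_seq in Hi.
    rewrite Hz by lia. rewrite dot_sumR, sumR_mull. apply sumR_ext. intros; lra.
  - rewrite sumR_swap. apply sumR_ext. intros j _. rewrite dot_sumR, sumR_mull. reflexivity.
Qed.

Lemma exists_positive_weight (m : nat) (lam : vec) :
  dot m lam (fun _ => 1) = 1 -> exists j, (j < m)%nat /\ 0 < lam j.
Proof.
  intros Hsum. apply NNPP. intros Hnone.
  assert (Hle : dot m lam (fun _ => 1) <= sumR (seq 0 m) (fun _ => 0)).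
  { apply sumR_le. intros j Hj. apply in_seq in Hj.
    destruct (Rle_dec (lam j) 0); [lra|].
    exfalso. apply Hnone. exists j. split; [lia | lra]. }
  rewrite sumR_zero in Hle. lra.
Qed.

Lemma convex_combination_le_lower_bound (m : nat) (lam a : vec) (c : R) (j0 : nat) :
  (forall j, (j < m)%nat -> 0 <= lam j /\ c <= a j) ->
  dot m lam (fun _ => 1) = 1 ->
  dot m lam a <= c ->
  (j0 < m)%nat -> 0 < lam j0 ->
  a j0 <= c.
Proof.
  intros Hterms Hsum Hle Hj0 Hpos.
  assert (Hexcess : dot m lam (fun j => a j - c) = dot m lam a - c).
  { rewrite !dot_sumR in *.
    replace (sumR (seq 0 m) (fun j => lam j * a j) - c)
      with (sumR (seq 0 m) (fun j => lam j * a j) + (- c) * sumR (seq 0 m) (fun j => lam j * 1))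
      by (rewrite Hsum; lra).
    rewrite sumR_mull, <- sumR_add. apply sumR_ext. intros; lra. }
  assert (Hterm : lam j0 * (a j0 - c) <= dot m lam (fun j => a j - c)).
  { apply (sumR_term_le (seq 0 m) (fun j => lam j * (a j - c))).
    - apply in_seq; lia.
    - intros j Hj. apply in_seq in Hj. destruct (Hterms j ltac:(lia)).
      apply Rmult_le_pos; lra. }
  destruct (Rle_dec (a j0) c) as [|Hgt]; [assumption|].
  assert (0 < lam j0 * (a j0 - c)) by (apply Rmult_lt_0_compat; lra).
  lra.
Qed.

Lemma S_psi_image (n : nat) (C : vec -> Prop) (psi : vec -> vec) (u : vec) :
  C u -> S_psi n C psi (psi u).
Proof.
  intros Cu. exists 1%nat, (fun _ => 1), (fun _ => u).
  repeat split; auto; try lra; intros; unfold dot; simpl; lra.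
Qed.

Lemma normal_set_le_image (n : nat) (C : vec -> Prop) (psi : vec -> vec) (z p u : vec) :
  normal_set n C psi z p -> C u -> dot n p z <= dot n p (psi u).
Proof.
  intros [_ [Hlower _]] Cu. apply Hlower. exists (psi u). split; auto using S_psi_image.
Qed.

Lemma calibrated_minimizer_in_argmin (n k : nat) (L : nat -> nat -> R)
    (C : vec -> Prop) (psi : vec -> vec) (pred : vec -> nat) (p u : vec) :
  (forall q, simplex n q ->
     inf_gt (fun v => C v /\ ~ in_argmin n k L q (pred v)) C (fun v => dot n q (psi v))) ->
  simplex n p -> C u ->
  (forall v, C v -> dot n p (psi u) <= dot n p (psi v)) ->
  in_argmin n k L p (pred u).
Proof.
  intros Hcal Hp Cu Hmin. apply NNPP. intros Hnot.
  destruct (Hcal p Hp) as [r [Hr [v [Cv Hv]]]].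
  specialize (Hr u (conj Cu Hnot)). specialize (Hmin v Cv). lra.
Qed.

Theorem mainTheorem3 (n k d : nat) (L : nat -> nat -> R)
  (C : vec -> Prop) (psi : vec -> vec)
  (hL : loss_matrix n k L) (hstand : standing_assumption n k L)
  (hC : convex_set d C) (hpsi : surrogate n C psi)
  (hcal : calibrated n k L C psi) :
  forall z, S_psi n C psi z ->
    exists t, (t < k)%nat /\
      forall p, normal_set n C psi z p -> trigger n k L t p.
Proof.
  intros z [m [lam [us [_ [Hus [Hsum Hz]]]]]].
  destruct hcal as [pred [Hpred Hcal]].
  destruct (exists_positive_weight m lam Hsum) as [j0 [Hj0 Hpos]].
  exists (pred (us j0)). split; [apply Hpred, Hus; exact Hj0|].
  intros p Hnormal. split; [apply Hnormal|].
  apply (calibrated_minimizer_in_argmin n k L C psi pred); [exact Hcal | apply Hnormal | apply Hus; exact Hj0 |].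
  intros v Cv.
  apply Rle_trans with (dot n p z); [| exact (normal_set_le_image n C psi z p v Hnormal Cv)].
  apply (convex_combination_le_lower_bound m lam (fun j => dot n p (psi (us j))) _ j0);
    [| exact Hsum | right; symmetry; apply dot_convex_combination; exact Hz | exact Hj0 | exact Hpos].
  intros j Hj. destruct (Hus j Hj) as [Cj Hlam].
  split; [exact Hlam | exact (normal_set_le_image n C psi z p _ Hnormal Cj)].
Qed.
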